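(* Let $x\in\mathbb{R}$, $\lambda\in\mathbb{C}$, and $n,k\in\mathbb{N}_0$. Then $$y_{3}(n,k;\lambda;1,x)=\frac{1}{k!}\sum_{j=0}^{k}\binom{k}{j}\lambda^{j}\sum_{m=0}^{n}k^{m}j^{n-m}B_{m}^{n}(x)$$ and $$y_{3}(n,k;\lambda;1,x)=\sum_{m=0}^{n}k^{m}B_{m}^{n}(x)\,y_{1}(n-m,k;\lambda),$$ where $B_m^n(x)=\binom{n}{m}x^{m}(1-x)^{n-m}$ are the Bernstein basis functions.
   Context: For $a,b\in\mathbb{R}$, $\lambda\in\mathbb{C}$ and $k\in\mathbb{N}_0$: the numbers $y_3(n,k;\lambda;a,b)$ are defined by $\frac{e^{bkt}}{k!}(\lambda e^{(a-b)t}+1)^{k}=\sum_{n\ge0}y_{3}(n,k;\lambda;a,b)\frac{t^{n}}{n!}$, and the numbers $y_1(n,k;\lambda)$ by $\frac{1}{k!}(\lambda e^{t}+1)^{k}=\sum_{n\ge0}y_{1}(n,k;\lambda)\frac{t^{n}}{n!}$. Convention: $0^0=1$. *)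

From mathcomp Require Import all_boot all_algebra.
From mathcomp Require Import reals.
From mathcomp.real_closed Require Import complex.

Set Implicit Arguments.
Unset Strict Implicit.
Unset Printing Implicit Defensive.

Import GRing.Theory Num.Theory.
Local Open Scope ring_scope.

Section Defs.
Variable R : realType.
Local Notation C := R[i].

Definition rC (x : R) : C := (x%:C)%C.

(* Truncation at degree N of the formal power series exp(c t) = sum c^i t^i / i! *)
Definition expTrunc (N : nat) (c : C) : {poly C} :=
  \poly_(i < N.+1) (c ^+ i / (i`!)%:R).

(* y_3(n,k;lambda;a,b) : n! times the coefficient of t^n in the formal power
   series  e^{bkt}/k! (lambda e^{(a-b)t} + 1)^k.  Truncating every factor at
   degree n does not change the coefficient of t^n. *)
Definition y3 (n k : nat) (lam : C) (a b : R) : C :=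
  (n`!)%:R * ((expTrunc n (rC b * k%:R)
               * (lam *: expTrunc n (rC (a - b)) + 1) ^+ k)`_n) / (k`!)%:R.

(* y_1(n,k;lambda) : n! times the coefficient of t^n in (lambda e^t + 1)^k / k! *)
Definition y1 (n k : nat) (lam : C) : C :=
  (n`!)%:R * (((lam *: expTrunc n 1 + 1) ^+ k)`_n) / (k`!)%:R.

Definition bernstein (n m : nat) (x : R) : R :=
  ('C(n, m))%:R * x ^+ m * (1 - x) ^+ (n - m).

End Defs.

(* The generating function of y_3 for a = 1, b = x expands binomially as
   (1/k!) sum_j C(k,j) lam^j e^{(kx + j(1-x)) t}, so n!-times its t^n
   coefficient is (1/k!) sum_j C(k,j) lam^j (kx + j(1-x))^n.  Expanding
   (kx + j(1-x))^n by the binomial theorem gives exactly the Bernstein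
   polynomials B_m^n(x) with weights k^m j^(n-m), which is the first identity;
   for x = 0 the same computation gives y_1(n,k;lam) = (1/k!) sum_j C(k,j)
   lam^j j^n, and regrouping the double sum yields the second identity. *)
From mathcomp Require Import all_boot all_algebra.
From mathcomp Require Import reals.
From mathcomp.real_closed Require Import complex.
From mathcomp Require Import ring.
Import GRing.Theory Num.Theory.
Local Open Scope ring_scope.
Set Implicit Arguments. Unset Strict Implicit.

Section TakePolyMul.
Variable R : nzSemiRingType.
Implicit Types p q : {poly R}.

Lemma take_polyMl m p q : take_poly m (take_poly m p * q) = take_poly m (p * q).
Proof.
apply/polyP => i; rewrite !coef_take_poly; case: ltnP => // him.
rewrite !coefM; apply: eq_bigr => j _.
by rewrite coef_take_poly (leq_ltn_trans (ltnSE (ltn_ord j)) him).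
Qed.

Lemma take_polyMr m p q : take_poly m (p * take_poly m q) = take_poly m (p * q).
Proof.
apply/polyP => i; rewrite !coef_take_poly; case: ltnP => // him.
rewrite !coefM; apply: eq_bigr => j _.
by rewrite coef_take_poly (leq_ltn_trans (leq_subr _ _) him).
Qed.

End TakePolyMul.

Section TruncatedExp.
Variable R : realType.
Local Notation C := R[i].
Implicit Types (c d lam : C) (N : nat).

Lemma fact_natr_neq0 m : (m`!)%:R != 0 :> C.
Proof. by rewrite pnatr_eq0 -lt0n fact_gt0. Qed.

Lemma coef_expTrunc N c i : (i <= N)%N -> (expTrunc N c)`_i = c ^+ i / (i`!)%:R.
Proof. by move=> leiN; rewrite coef_poly ltnS leiN. Qed.

Lemma expTrunc0 N : expTrunc N (0 : C) = 1.
Proof.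
apply/polyP => i; rewrite coef_poly coef1.
by case: i => [|i]; rewrite ?fact0 ?divr1 // expr0n mul0r if_same.
Qed.

(* Truncated form of e^{ct} e^{dt} = e^{(c+d)t}: the Cauchy product of the
   coefficients is the binomial theorem divided by i!. *)
Lemma take_poly_expTruncM N c d :
  take_poly N.+1 (expTrunc N c * expTrunc N d) = expTrunc N (c + d).
Proof.
apply/polyP => i; rewrite coef_take_poly coef_poly; case: ltnP => // /ltnSE leiN.
rewrite coefM addrC exprDn mulr_suml; apply: eq_bigr => -[j /= ltji] _.
have leji : (j <= i)%N by [].
rewrite !coef_expTrunc ?(leq_trans (leq_subr _ _) leiN) ?(leq_trans leji leiN) //.
rewrite -(bin_fact leji) !natrM -mulr_natl.
have := fact_natr_neq0 j; have := fact_natr_neq0 (i - j).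
have : ('C(i, j))%:R != 0 :> C by rewrite pnatr_eq0 -lt0n bin_gt0.
by move=> ? ? ?; field; apply/and3P.
Qed.

Lemma take_poly_expTruncX N c j :
  take_poly N.+1 (expTrunc N c ^+ j) = expTrunc N (j%:R * c).
Proof.
elim: j => [|j IHj]; first by rewrite mul0r expTrunc0 take_poly_id ?size_poly1.
rewrite exprSr -take_polyMl IHj take_poly_expTruncM.
by rewrite -[c in _ + c]mul1r -mulrDl -natr1.
Qed.

Lemma coef_expTrunc_binomial N d c lam k :
  (expTrunc N d * (lam *: expTrunc N c + 1) ^+ k)`_N =
  \sum_(j < k.+1) ('C(k, j))%:R * lam ^+ j * ((d + j%:R * c) ^+ N / (N`!)%:R).
Proof.
rewrite exprD1n mulr_sumr coef_sum; apply: eq_bigr => j _.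
rewrite exprZn mulrnAr -scalerAr coefMn coefZ.
have -> : (expTrunc N d * expTrunc N c ^+ j)`_N
          = (take_poly N.+1 (expTrunc N d * expTrunc N c ^+ j))`_N.
  by rewrite coef_take_poly ltnSn.
rewrite -take_polyMr take_poly_expTruncX take_poly_expTruncM coef_expTrunc //.
by rewrite -mulrA [RHS]mulr_natl.
Qed.

Lemma y3E n k lam (a b : R) :
  y3 n k lam a b = (k`!)%:R^-1 *
    \sum_(j < k.+1) ('C(k, j))%:R * lam ^+ j * (k%:R * rC b + j%:R * rC (a - b)) ^+ n.
Proof.
rewrite /y3 coef_expTrunc_binomial mulr_sumr mulr_suml mulr_sumr.
apply: eq_bigr => j _; rewrite [rC b * _]mulrC.
by move: (fact_natr_neq0 n) (fact_natr_neq0 k) => ? ?; field; apply/andP.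
Qed.

Lemma y1E n k lam :
  y1 n k lam = (k`!)%:R^-1 * \sum_(j < k.+1) ('C(k, j))%:R * lam ^+ j * j%:R ^+ n.
Proof.
rewrite /y1.
have -> : ((lam *: expTrunc n 1 + 1) ^+ k)`_n
          = (expTrunc n 0 * (lam *: expTrunc n 1 + 1) ^+ k)`_n.
  by rewrite expTrunc0 mul1r.
rewrite coef_expTrunc_binomial mulr_sumr mulr_suml mulr_sumr; apply: eq_bigr => j _.
rewrite add0r mulr1.
by move: (fact_natr_neq0 n) (fact_natr_neq0 k) => ? ?; field; apply/andP.
Qed.

Lemma exprD_bernstein (u v : C) (x : R) n :
  (u * rC x + v * rC (1 - x)) ^+ n =
  \sum_(m < n.+1) u ^+ m * v ^+ (n - m) * rC (bernstein n m x).
Proof.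
rewrite addrC exprDn; apply: eq_bigr => m _.
rewrite /bernstein /rC !rmorphM !rmorphXn rmorph_nat !exprMn -mulr_natl.
ring.
Qed.

End TruncatedExp.

Theorem mainTheorem4 (R : realType) (x : R) (lam : R[i]) (n k : nat) :
  y3 n k lam 1 x =
    (k`!)%:R^-1 * \sum_(j < k.+1) ('C(k, j))%:R * lam ^+ j *
      \sum_(m < n.+1) (k%:R) ^+ m * (j%:R) ^+ (n - m) * rC (bernstein n m x)
  /\
  y3 n k lam 1 x =
    \sum_(m < n.+1) (k%:R) ^+ m * rC (bernstein n m x) * y1 (n - m) k lam.
Proof.
have y3_bernstein : y3 n k lam 1 x =
    (k`!)%:R^-1 * \sum_(j < k.+1) ('C(k, j))%:R * lam ^+ j *
      \sum_(m < n.+1) (k%:R) ^+ m * (j%:R) ^+ (n - m) * rC (bernstein n m x).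
  by rewrite y3E; congr (_ * _); apply: eq_bigr => j _; rewrite exprD_bernstein.
split=> //; rewrite y3_bernstein.
under [RHS]eq_bigr => m _ do rewrite y1E !big_distrr.
rewrite big_distrr /= exchange_big /=; apply: eq_bigr => j _.
rewrite !big_distrr /=; apply: eq_bigr => m _.
ring.
Qed.
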